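(* Let $\xi:I\to\mathbb{R}^3$ be as in the context with $k>0$ and $\tau\ne0$ on the open interval $I$, and let $e$ be its evolute. Then there exists an orientation-preserving isometry $M$ of $\mathbb{R}^3$ with $M(\xi(t))=e(t)$ for all $t\in I$ if and only if $k=|\tau|$ on $I$ and either (a) $k$ is constant on $I$ (a helix with equal curvature and absolute torsion), or (b) there exist $c>0$ and $t_0\notin I$ such that $k(t)=c\,|t-t_0|^{-1/2}$ for all $t\in I$. (The case $\tau>0$ is the curves with $k=\tau$; the case $\tau<0$ is their mirror images.)
   Context: $\xi$ is a smooth arclength-parametrized curve with curvature $k>0$, $r=1/k$, torsion $\tau$ and Frenet frame $(\mathbf{t},\mathbf{n},\mathbf{b})$. Its evolute is the curve $e(t)=\xi(t)+r(t)\mathbf{n}(t)+\frac{r'(t)}{\tau(t)}\mathbf{b}(t)$, the locus of centers of osculating spheres, parametrized by the same parameter $t$. *)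

From Stdlib Require Import Reals.
From Coquelicot Require Import Coquelicot.
Open Scope R_scope.

Record V3 := mkV3 { vx : R; vy : R; vz : R }.

Definition vadd (u v : V3) : V3 := mkV3 (vx u + vx v) (vy u + vy v) (vz u + vz v).
Definition vsub (u v : V3) : V3 := mkV3 (vx u - vx v) (vy u - vy v) (vz u - vz v).
Definition vscal (a : R) (u : V3) : V3 := mkV3 (a * vx u) (a * vy u) (a * vz u).
Definition dot (u v : V3) : R := vx u * vx v + vy u * vy v + vz u * vz v.
Definition cross (u v : V3) : V3 :=
  mkV3 (vy u * vz v - vz u * vy v)
       (vz u * vx v - vx u * vz v)
       (vx u * vy v - vy u * vx v).
Definition vnorm (u : V3) : R := sqrt (dot u u).
Definition det3 (u v w : V3) : R := dot (cross u v) w.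

Definition in_I (a b : Rbar) (t : R) : Prop := Rbar_lt a t /\ Rbar_lt t b.

Definition dV (c : R -> V3) (t : R) : V3 :=
  mkV3 (Derive (fun s => vx (c s)) t)
       (Derive (fun s => vy (c s)) t)
       (Derive (fun s => vz (c s)) t).

Definition smooth_on (a b : Rbar) (c : R -> V3) : Prop :=
  forall (n : nat) (t : R), in_I a b t ->
    ex_derive (Derive_n (fun s => vx (c s)) n) t /\
    ex_derive (Derive_n (fun s => vy (c s)) n) t /\
    ex_derive (Derive_n (fun s => vz (c s)) n) t.

(* Frenet apparatus of an arclength-parametrized curve *)
Definition curvature (c : R -> V3) (t : R) : R := vnorm (dV (dV c) t).
Definition tangent (c : R -> V3) (t : R) : V3 := dV c t.
Definition normal (c : R -> V3) (t : R) : V3 := vscal (/ curvature c t) (dV (dV c) t).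
Definition binormal (c : R -> V3) (t : R) : V3 := cross (tangent c t) (normal c t).
(* Frenet: n' = -k t + tau b, hence tau = n' . b *)
Definition torsion (c : R -> V3) (t : R) : R := dot (dV (normal c) t) (binormal c t).
Definition radius (c : R -> V3) (t : R) : R := / curvature c t.

Definition evolute (c : R -> V3) (t : R) : V3 :=
  vadd (vadd (c t) (vscal (radius c t) (normal c t)))
       (vscal (Derive (radius c) t / torsion c t) (binormal c t)).

Definition orient_isometry (M : V3 -> V3) : Prop :=
  (forall x y, vnorm (vsub (M x) (M y)) = vnorm (vsub x y)) /\
  (forall x y z w, det3 (vsub (M y) (M x)) (vsub (M z) (M x)) (vsub (M w) (M x))
                   = det3 (vsub y x) (vsub z x) (vsub w x)).

(* Along the Frenet frame (T, N, B) the evolute e = xi + r N + q B, with r = 1/k and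
   q = r'/tau, has derivative e' = sigma B where sigma = tau/k + q'.

   If M = L + p is a rigid motion with M o xi = e, then L T = sigma B, so sigma = ±1 is
   constant; differentiating twice and comparing det (T, xi'', xi''') = k^2 tau with the
   determinant of its image forces k = sigma tau.  Hence tau/k = sigma, q' = 0, and
   r r' = sigma q is constant: r^2 is affine in t, which is exactly the alternative
   "k constant, or k = c |t - t0|^(-1/2)".

   Conversely, if tau = s k with s = ±1 and r^2 is affine, then q is constant and e' = s B.
   The frame (s B, -N, s T) satisfies the same Frenet equations as (T, N, B), so the rotation
   matching the two frames at one point matches them everywhere (the sum of the three inner
   products has zero derivative and stays equal to 3), and e - L xi is then constant. *)

From Stdlib Require Import Reals Lra Nsatz.
From Coquelicot Require Import Coquelicot.
Open Scope R_scope.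

(** * Real functions on an interval *)

Lemma Rsqr_1_cases s : s * s = 1 -> s = 1 \/ s = -1.
Proof. intro H. destruct (Rle_dec 0 s); [left | right]; nra. Qed.

Lemma is_derive_eq0_of_locally_const (f : R -> R) t c d :
  locally t (fun s => f s = c) -> is_derive f t d -> d = 0.
Proof.
  intros Hc Hd. apply is_derive_unique in Hd. rewrite <- Hd.
  apply is_derive_unique, (is_derive_ext_loc (fun _ => c)).
  - apply filter_imp with (2 := Hc). intros s Hs. now rewrite Hs.
  - apply (is_derive_const c).
Qed.

Lemma is_derive_eq0_of_locally_sq1 (f : R -> R) t d :
  locally t (fun s => f s * f s = 1) -> is_derive f t d -> d = 0.
Proof.
  intros Hf Hd.
  assert (Hsq := Derive.is_derive_mult f f t d d Hd Hd).
  apply (is_derive_eq0_of_locally_const _ _ 1) in Hsq; [|exact Hf].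
  assert (Ht : f t * f t = 1) by exact (locally_singleton _ _ Hf).
  nra.
Qed.

Section Interval.
Variables a b : Rbar.

Lemma locally_in_I t : in_I a b t -> locally t (in_I a b).
Proof.
  intro Ht. apply (open_and (fun s : R => Rbar_lt a s) (fun s : R => Rbar_lt s b)); auto.
  - apply open_Rbar_gt.
  - apply open_Rbar_lt.
Qed.

Lemma locally_on_I (P : R -> Prop) t :
  in_I a b t -> (forall s, in_I a b s -> P s) -> locally t P.
Proof. intros Ht HP. exact (filter_imp _ _ HP (locally_in_I t Ht)). Qed.

Lemma in_I_between s1 s2 x : in_I a b s1 -> in_I a b s2 -> s1 <= x <= s2 -> in_I a b x.
Proof.
  intros [H1 _] [_ H2] [H3 H4]. split.
  - apply (Rbar_lt_le_trans a s1 x); auto.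
  - apply (Rbar_le_lt_trans x s2 b); auto.
Qed.

Lemma in_I_inhabited : Rbar_lt a b -> exists s, in_I a b s.
Proof.
  unfold in_I. destruct a as [x| |], b as [y| |]; simpl; intros H; try contradiction.
  - exists ((x + y) / 2). split; lra.
  - exists (x + 1). split; auto; lra.
  - exists (y - 1). split; auto; lra.
  - exists 0. split; auto.
Qed.

Lemma is_derive_0_const_on_I (f : R -> R) :
  (forall s, in_I a b s -> is_derive f s 0) ->
  forall s1 s2, in_I a b s1 -> in_I a b s2 -> f s1 = f s2.
Proof.
  intros Hd s1 s2 H1 H2.
  assert (Hin : forall x, Rmin s1 s2 <= x <= Rmax s1 s2 -> in_I a b x).
  { intros x Hx. unfold Rmin, Rmax in Hx. destruct (Rle_dec s1 s2).
    - exact (in_I_between s1 s2 x H1 H2 Hx).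
    - exact (in_I_between s2 s1 x H2 H1 Hx). }
  destruct (MVT_gen f s1 s2 (fun _ => 0)) as [c [_ Hc]].
  - intros x Hx. apply Hd, Hin. lra.
  - intros x Hx. apply continuity_pt_filterlim, (ex_derive_continuous f).
    exists 0. now apply Hd, Hin.
  - lra.
Qed.

Lemma affine_on_I_of_is_derive (f : R -> R) al :
  Rbar_lt a b -> (forall s, in_I a b s -> is_derive f s al) ->
  exists be, forall s, in_I a b s -> f s = al * s + be.
Proof.
  intros Hab Hd. destruct (in_I_inhabited Hab) as [s0 H0].
  exists (f s0 - al * s0). intros s Hs.
  enough (f s - al * s = f s0 - al * s0) by lra.
  apply (is_derive_0_const_on_I (fun u => f u - al * u)); auto.
  intros u Hu. replace 0 with (al - al * 1) by ring.
  apply (is_derive_minus f (fun u => al * u)); [now apply Hd|].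
  apply (is_derive_scal (fun u => u)), (is_derive_id u).
Qed.

Lemma sign_of_not_in_I t0 : Rbar_lt a b -> ~ in_I a b t0 ->
  exists e, (e = 1 \/ e = -1) /\ forall s, in_I a b s -> 0 < e * (s - t0).
Proof.
  intros Hab Hn. destruct (in_I_inhabited Hab) as [s0 H0].
  destruct (Rlt_dec t0 s0) as [L|L].
  - exists 1. split; [now left|]. intros s Hs. destruct (Rlt_dec t0 s); [lra|].
    exfalso. apply Hn, (in_I_between s s0); auto. lra.
  - exists (-1). split; [now right|]. intros s Hs. destruct (Rlt_dec s t0); [lra|].
    exfalso. apply Hn, (in_I_between s0 s); auto.
    assert (s0 <> t0) by (intros ->; auto). lra.
Qed.

Lemma inv_sq_affine_of_curvature_cases (k : R -> R) : Rbar_lt a b ->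
  ((exists k0, forall t, in_I a b t -> k t = k0) \/
   (exists c t0, 0 < c /\ ~ in_I a b t0 /\
      forall t, in_I a b t -> k t = c / sqrt (Rabs (t - t0)))) ->
  exists al be, forall t, in_I a b t -> (/ k t) ^ 2 = al * t + be.
Proof.
  intros Hab [[k0 Hk0] | [c [t0 [Hc [Hn Hct]]]]].
  - exists 0, ((/ k0) ^ 2). intros t Ht. rewrite Hk0 by exact Ht. ring.
  - destruct (sign_of_not_in_I t0 Hab Hn) as [e [He Hpos]].
    exists (e / c ^ 2), (- e * t0 / c ^ 2). intros t Ht.
    assert (P := Hpos t Ht).
    assert (E : Rabs (t - t0) = e * (t - t0))
      by (destruct He as [-> | ->]; [rewrite Rabs_pos_eq | rewrite Rabs_left]; lra).
    assert (Q := sqrt_lt_R0 (Rabs (t - t0)) ltac:(lra)).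
    rewrite Hct by exact Ht.
    replace ((/ (c / sqrt (Rabs (t - t0)))) ^ 2) with (sqrt (Rabs (t - t0)) ^ 2 / c ^ 2)
      by (field; lra).
    rewrite pow2_sqrt, E by lra. field. lra.
Qed.

Lemma curvature_cases_of_inv_sq_affine (k : R -> R) al be :
  (forall t, in_I a b t -> 0 < k t) ->
  (forall t, in_I a b t -> (/ k t) ^ 2 = al * t + be) ->
  (exists k0, forall t, in_I a b t -> k t = k0) \/
  (exists c t0, 0 < c /\ ~ in_I a b t0 /\
     forall t, in_I a b t -> k t = c / sqrt (Rabs (t - t0))).
Proof.
  intros Hk HC.
  assert (Hr : forall t, in_I a b t -> k t = / sqrt (al * t + be)).
  { intros t Ht. rewrite <- (HC t Ht), sqrt_pow2, Rinv_inv; [reflexivity|].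
    left. now apply Rinv_0_lt_compat, Hk. }
  destruct (Req_dec al 0) as [Z|Z].
  - left. exists (/ sqrt be). intros t Ht. rewrite Hr, Z by exact Ht. f_equal. f_equal. ring.
  - right. set (t0 := - be / al).
    assert (Hpos : forall t, in_I a b t -> 0 < al * (t - t0)).
    { intros t Ht. replace (al * (t - t0)) with (al * t + be) by (unfold t0; field; lra).
      rewrite <- (HC t Ht). apply pow_lt, Rinv_0_lt_compat, Hk, Ht. }
    assert (Pal : 0 < Rabs al) by (apply Rabs_pos_lt; exact Z).
    exists (/ sqrt (Rabs al)), t0. split; [|split].
    + apply Rinv_0_lt_compat, sqrt_lt_R0, Pal.
    + intro H0. specialize (Hpos t0 H0). rewrite Rminus_diag, Rmult_0_r in Hpos. lra.
    + intros t Ht. rewrite Hr by exact Ht. assert (P := Hpos t Ht).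
      assert (Pt : 0 < Rabs (t - t0)).
      { apply Rabs_pos_lt. intro Z2. rewrite Z2, Rmult_0_r in P. lra. }
      replace (al * t + be) with (Rabs al * Rabs (t - t0))
        by (rewrite <- Rabs_mult, Rabs_pos_eq by lra; unfold t0; field; exact Z).
      rewrite sqrt_mult by lra.
      assert (Q1 := sqrt_lt_R0 _ Pal). assert (Q2 := sqrt_lt_R0 _ Pt).
      field. lra.
Qed.

End Interval.

(** * Vectors and linear maps *)

Lemma v3_ext u v : vx u = vx v -> vy u = vy v -> vz u = vz v -> u = v.
Proof. destruct u, v; simpl; intros; subst; reflexivity. Qed.

Ltac veq := apply v3_ext; simpl.

Definition vzero : V3 := mkV3 0 0 0.

Lemma dot_comm u v : dot u v = dot v u.
Proof. unfold dot; ring. Qed.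

Lemma dot_scal_l c u v : dot (vscal c u) v = c * dot u v.
Proof. unfold dot; simpl; ring. Qed.

Lemma dot_scal_r c u v : dot u (vscal c v) = c * dot u v.
Proof. unfold dot; simpl; ring. Qed.

Lemma dot_vsub u v : dot (vsub u v) (vsub u v) = dot u u + dot v v - 2 * dot u v.
Proof. unfold dot; simpl; ring. Qed.

Lemma dot_self_ge0 u : 0 <= dot u u.
Proof. unfold dot. nra. Qed.

Lemma dot_self_eq0 u : dot u u = 0 -> u = vzero.
Proof. destruct u; unfold dot; simpl; intro H. veq; nra. Qed.

Lemma dot_self_of_vnorm u v : vnorm u = vnorm v -> dot u u = dot v v.
Proof. intro H. apply sqrt_inj; auto using dot_self_ge0. Qed.

Lemma dot_self_of_vnorm1 u : vnorm u = 1 -> dot u u = 1.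
Proof. intro H. apply sqrt_inj; [apply dot_self_ge0 | lra | now rewrite sqrt_1]. Qed.

Lemma dot_unit_le1 u v : dot u u = 1 -> dot v v = 1 -> dot u v <= 1.
Proof. intros Hu Hv. assert (P := dot_self_ge0 (vsub u v)). rewrite dot_vsub in P. lra. Qed.

Lemma unit_eq_of_dot1 u v : dot u u = 1 -> dot v v = 1 -> dot u v = 1 -> u = v.
Proof.
  intros Hu Hv Huv. assert (Z : dot (vsub u v) (vsub u v) = 0) by (rewrite dot_vsub; lra).
  apply dot_self_eq0 in Z. destruct u, v; injection Z; simpl; intros. veq; lra.
Qed.

Definition orthonormal (u v : V3) : Prop := dot u u = 1 /\ dot v v = 1 /\ dot u v = 0.

Lemma orthonormal_cross u v : orthonormal u v ->
  dot (cross u v) (cross u v) = 1 /\ dot u (cross u v) = 0 /\ dot v (cross u v) = 0.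
Proof.
  destruct u as [u1 u2 u3], v as [v1 v2 v3]; unfold orthonormal, dot, cross; simpl.
  intros [H1 [H2 H3]]. split; [|split]; [nsatz | ring | ring].
Qed.

Lemma orthonormal_expand u v x : orthonormal u v ->
  x = vadd (vadd (vscal (dot x u) u) (vscal (dot x v) v)) (vscal (dot x (cross u v)) (cross u v)).
Proof.
  destruct u as [u1 u2 u3], v as [v1 v2 v3], x as [x1 x2 x3];
    unfold orthonormal, dot, cross; simpl; intros [H1 [H2 H3]].
  veq; nsatz.
Qed.

Lemma orthonormal_dot_comb p q a1 a2 a3 b1 b2 b3 : orthonormal p q ->
  dot (vadd (vadd (vscal a1 p) (vscal a2 q)) (vscal a3 (cross p q)))
      (vadd (vadd (vscal b1 p) (vscal b2 q)) (vscal b3 (cross p q))) =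
  a1 * b1 + a2 * b2 + a3 * b3.
Proof.
  intro H. destruct (orthonormal_cross p q H) as [H4 [H5 H6]]. destruct H as [H1 [H2 H3]].
  transitivity (a1 * b1 * dot p p + a2 * b2 * dot q q + a3 * b3 * dot (cross p q) (cross p q)
    + (a1 * b2 + a2 * b1) * dot p q + (a1 * b3 + a3 * b1) * dot p (cross p q)
    + (a2 * b3 + a3 * b2) * dot q (cross p q)).
  - unfold dot; simpl; ring.
  - rewrite H1, H2, H3, H4, H5, H6. ring.
Qed.

Lemma orthonormal_dot_expand u v x y : orthonormal u v ->
  dot x y = dot x u * dot y u + dot x v * dot y v + dot x (cross u v) * dot y (cross u v).
Proof.
  intro H. rewrite (orthonormal_expand u v x), (orthonormal_expand u v y) at 1 by exact H.
  now rewrite orthonormal_dot_comb.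
Qed.

Lemma det3_comb (a1 a2 a3 b1 b2 b3 c1 c2 c3 : R) u1 u2 u3 :
  det3 (vadd (vadd (vscal a1 u1) (vscal a2 u2)) (vscal a3 u3))
       (vadd (vadd (vscal b1 u1) (vscal b2 u2)) (vscal b3 u3))
       (vadd (vadd (vscal c1 u1) (vscal c2 u2)) (vscal c3 u3)) =
  (a1 * (b2 * c3 - b3 * c2) - a2 * (b1 * c3 - b3 * c1) + a3 * (b1 * c2 - b2 * c1))
  * det3 u1 u2 u3.
Proof. unfold det3, dot, cross; simpl; ring. Qed.

Definition lin (C1 C2 C3 x : V3) : V3 :=
  vadd (vadd (vscal (vx x) C1) (vscal (vy x) C2)) (vscal (vz x) C3).

Lemma lin_vadd C1 C2 C3 u v : lin C1 C2 C3 (vadd u v) = vadd (lin C1 C2 C3 u) (lin C1 C2 C3 v).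
Proof. unfold lin. veq; ring. Qed.

Lemma lin_vscal C1 C2 C3 c u : lin C1 C2 C3 (vscal c u) = vscal c (lin C1 C2 C3 u).
Proof. unfold lin. veq; ring. Qed.

Definition dot_preserving (L : V3 -> V3) : Prop := forall u v, dot (L u) (L v) = dot u v.
Definition det_preserving (L : V3 -> V3) : Prop :=
  forall u v w, det3 (L u) (L v) (L w) = det3 u v w.

(* [L x - lin (L e1) (L e2) (L e3) x] has squared norm [0], expanding with [dot_preserving]. *)
Lemma dot_preserving_lin L : dot_preserving L ->
  forall x, L x = lin (L (mkV3 1 0 0)) (L (mkV3 0 1 0)) (L (mkV3 0 0 1)) x.
Proof.
  intros Ldot [x1 x2 x3].
  set (C1 := L (mkV3 1 0 0)). set (C2 := L (mkV3 0 1 0)). set (C3 := L (mkV3 0 0 1)).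
  set (y := L (mkV3 x1 x2 x3)).
  assert (Z : dot (vsub y (lin C1 C2 C3 (mkV3 x1 x2 x3)))
                  (vsub y (lin C1 C2 C3 (mkV3 x1 x2 x3))) = 0).
  { transitivity (dot y y - 2 * (x1 * dot y C1 + x2 * dot y C2 + x3 * dot y C3)
        + x1 * x1 * dot C1 C1 + x2 * x2 * dot C2 C2 + x3 * x3 * dot C3 C3
        + 2 * x1 * x2 * dot C1 C2 + 2 * x1 * x3 * dot C1 C3 + 2 * x2 * x3 * dot C2 C3).
    - unfold lin, dot; simpl; ring.
    - unfold y, C1, C2, C3. rewrite !Ldot. unfold dot; simpl; ring. }
  apply dot_self_eq0 in Z. destruct y, (lin C1 C2 C3 (mkV3 x1 x2 x3)).
  injection Z; intros. veq; lra.
Qed.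

Lemma orient_isometry_lin M : orient_isometry M -> exists C1 C2 C3,
  dot_preserving (lin C1 C2 C3) /\ det_preserving (lin C1 C2 C3) /\
  forall x, M x = vadd (lin C1 C2 C3 x) (M vzero).
Proof.
  intros [Hdist Hdet]. set (L := fun x => vsub (M x) (M vzero)).
  assert (Ldist : forall x y,
      dot (vsub (L x) (L y)) (vsub (L x) (L y)) = dot (vsub x y) (vsub x y)).
  { intros x y. replace (vsub (L x) (L y)) with (vsub (M x) (M y)) by (unfold L; veq; ring).
    apply dot_self_of_vnorm, Hdist. }
  assert (Lnorm : forall x, dot (L x) (L x) = dot x x).
  { intro x. specialize (Ldist x vzero).
    replace (vsub (L x) (L vzero)) with (L x) in Ldist by (unfold L; veq; ring).
    rewrite Ldist. unfold dot; simpl; ring. }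
  assert (Ldot : dot_preserving L).
  { intros x y. specialize (Ldist x y). rewrite !dot_vsub, !Lnorm in Ldist. lra. }
  assert (Llin := dot_preserving_lin L Ldot).
  exists (L (mkV3 1 0 0)), (L (mkV3 0 1 0)), (L (mkV3 0 0 1)). split; [|split].
  - intros u v. rewrite <- !Llin. apply Ldot.
  - intros u v w. rewrite <- !Llin. unfold L.
    rewrite (Hdet vzero u v w). f_equal; unfold vzero; veq; ring.
  - intro x. rewrite <- Llin. unfold L. veq; ring.
Qed.

Lemma orient_isometry_of_lin C1 C2 C3 p :
  dot_preserving (lin C1 C2 C3) -> det_preserving (lin C1 C2 C3) ->
  orient_isometry (fun x => vadd (lin C1 C2 C3 x) p).
Proof.
  intros Ldot Ldet.
  assert (E : forall x y, vsub (vadd (lin C1 C2 C3 x) p) (vadd (lin C1 C2 C3 y) p)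
                          = lin C1 C2 C3 (vsub x y)) by (intros; unfold lin; veq; ring).
  split.
  - intros x y. rewrite E. unfold vnorm. now rewrite Ldot.
  - intros x y z w. rewrite !E. apply Ldet.
Qed.

Definition frame_img (u v p q x : V3) : V3 :=
  vadd (vadd (vscal (dot x u) p) (vscal (dot x v) q)) (vscal (dot x (cross u v)) (cross p q)).

Definition frame_map (u v p q : V3) : V3 -> V3 :=
  lin (frame_img u v p q (mkV3 1 0 0)) (frame_img u v p q (mkV3 0 1 0))
      (frame_img u v p q (mkV3 0 0 1)).

Lemma frame_map_eq u v p q x : frame_map u v p q x = frame_img u v p q x.
Proof. unfold frame_map, frame_img, lin, dot. veq; ring. Qed.

Lemma frame_map_dot u v p q : orthonormal u v -> orthonormal p q ->
  dot_preserving (frame_map u v p q).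
Proof.
  intros Huv Hpq x y.
  rewrite !frame_map_eq; unfold frame_img.
  rewrite orthonormal_dot_comb, (orthonormal_dot_expand u v x y); auto.
Qed.

Lemma frame_map_det u v p q : orthonormal u v -> orthonormal p q ->
  det_preserving (frame_map u v p q).
Proof.
  intros Huv Hpq x y z.
  assert (Hp := proj1 (orthonormal_cross p q Hpq)).
  assert (Hu := proj1 (orthonormal_cross u v Huv)).
  set (ex := fun x => vadd (vadd (vscal (dot x u) u) (vscal (dot x v) v))
                           (vscal (dot x (cross u v)) (cross u v))).
  replace (det3 x y z) with (det3 (ex x) (ex y) (ex z))
    by (unfold ex; now rewrite <- !orthonormal_expand).
  rewrite !frame_map_eq. unfold ex, frame_img. rewrite !det3_comb.
  change (det3 p q (cross p q)) with (dot (cross p q) (cross p q)).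
  change (det3 u v (cross u v)) with (dot (cross u v) (cross u v)).
  now rewrite Hp, Hu.
Qed.

Lemma frame_map_frame u v p q : orthonormal u v ->
  frame_map u v p q u = p /\ frame_map u v p q v = q /\
  frame_map u v p q (cross u v) = cross p q.
Proof.
  intro H. destruct (orthonormal_cross u v H) as [H4 [H5 H6]]. destruct H as [H1 [H2 H3]].
  rewrite !frame_map_eq; unfold frame_img. rewrite H1, H2, H4, (dot_comm v u), H3, H5, H6,
    (dot_comm (cross u v) u), H5, (dot_comm (cross u v) v), H6.
  split; [|split]; veq; ring.
Qed.

(** * Derivatives of curves *)

Definition is_vderive (c : R -> V3) (t : R) (v : V3) : Prop :=
  is_derive (fun s => vx (c s)) t (vx v) /\ is_derive (fun s => vy (c s)) t (vy v) /\
  is_derive (fun s => vz (c s)) t (vz v).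

Definition ex_vderive (c : R -> V3) (t : R) : Prop := exists v, is_vderive c t v.

Lemma is_vderive_dV c t v : is_vderive c t v -> dV c t = v.
Proof. intros [H1 [H2 H3]]. unfold dV. veq; now apply is_derive_unique. Qed.

Lemma is_vderive_unique c t v w : is_vderive c t v -> is_vderive c t w -> v = w.
Proof. intros Hv Hw. now rewrite <- (is_vderive_dV c t v Hv), <- (is_vderive_dV c t w Hw). Qed.

Lemma is_vderive_ext_loc (c d : R -> V3) t v :
  locally t (fun s => c s = d s) -> is_vderive c t v -> is_vderive d t v.
Proof.
  intros Hl [H1 [H2 H3]]; split; [|split];
    (eapply is_derive_ext_loc; [|eassumption]);
    apply filter_imp with (2 := Hl); intros s Hs; now rewrite Hs.
Qed.

Lemma is_vderive_const (p : V3) t : is_vderive (fun _ => p) t vzero.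
Proof. split; [|split]; apply (is_derive_const (V := R_NormedModule)). Qed.

Lemma is_vderive_add c d t v w : is_vderive c t v -> is_vderive d t w ->
  is_vderive (fun s => vadd (c s) (d s)) t (vadd v w).
Proof.
  intros [H1 [H2 H3]] [G1 [G2 G3]]; split; [|split]; simpl;
    now apply (is_derive_plus (V := R_NormedModule)).
Qed.

Lemma is_vderive_sub c d t v w : is_vderive c t v -> is_vderive d t w ->
  is_vderive (fun s => vsub (c s) (d s)) t (vsub v w).
Proof.
  intros [H1 [H2 H3]] [G1 [G2 G3]]; split; [|split]; simpl;
    now apply (is_derive_minus (V := R_NormedModule)).
Qed.

Lemma is_vderive_scal (f : R -> R) c t a v : is_derive f t a -> is_vderive c t v ->
  is_vderive (fun s => vscal (f s) (c s)) t (vadd (vscal a (c t)) (vscal (f t) v)).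
Proof. intros Hf [H1 [H2 H3]]; split; [|split]; simpl; now apply Derive.is_derive_mult. Qed.

Lemma is_vderive_cscal (a : R) c t v : is_vderive c t v ->
  is_vderive (fun s => vscal a (c s)) t (vscal a v).
Proof.
  intro H. replace (vscal a v) with (vadd (vscal 0 (c t)) (vscal a v)) by (veq; ring).
  apply (is_vderive_scal (fun _ => a)); [apply (is_derive_const a) | exact H].
Qed.

Lemma is_vderive_vscal_const (f : R -> R) (p : V3) t a : is_derive f t a ->
  is_vderive (fun s => vscal (f s) p) t (vscal a p).
Proof.
  intro H. replace (vscal a p) with (vadd (vscal a p) (vscal (f t) vzero)) by (veq; ring).
  apply (is_vderive_scal f (fun _ => p)); [exact H | apply is_vderive_const].
Qed.

Lemma is_vderive_lin C1 C2 C3 c t v : is_vderive c t v ->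
  is_vderive (fun s => lin C1 C2 C3 (c s)) t (lin C1 C2 C3 v).
Proof.
  intros [H1 [H2 H3]]. unfold lin.
  apply is_vderive_add; [apply is_vderive_add|]; now apply is_vderive_vscal_const.
Qed.

Lemma is_derive_dot c d t v w : is_vderive c t v -> is_vderive d t w ->
  is_derive (fun s => dot (c s) (d s)) t (dot v (d t) + dot (c t) w).
Proof.
  intros [H1 [H2 H3]] [G1 [G2 G3]]. unfold dot.
  replace (vx v * vx (d t) + vy v * vy (d t) + vz v * vz (d t)
           + (vx (c t) * vx w + vy (c t) * vy w + vz (c t) * vz w))
    with ((vx v * vx (d t) + vx (c t) * vx w) + (vy v * vy (d t) + vy (c t) * vy w)
          + (vz v * vz (d t) + vz (c t) * vz w)) by ring.
  apply (is_derive_plus (V := R_NormedModule)); [apply (is_derive_plus (V := R_NormedModule))|];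
    now apply Derive.is_derive_mult.
Qed.

Lemma is_vderive_cross c d t v w : is_vderive c t v -> is_vderive d t w ->
  is_vderive (fun s => cross (c s) (d s)) t (vadd (cross v (d t)) (cross (c t) w)).
Proof.
  intros [H1 [H2 H3]] [G1 [G2 G3]]; unfold cross; split; [|split]; simpl;
  match goal with |- is_derive _ _ (?p * ?q - ?r * ?s + (?p' * ?q' - ?r' * ?s')) =>
    replace (p * q - r * s + (p' * q' - r' * s')) with ((p * q + p' * q') - (r * s + r' * s'))
      by ring end;
  apply (is_derive_minus (V := R_NormedModule)); now apply Derive.is_derive_mult.
Qed.

Lemma is_derive_vnorm c t v : 0 < dot (c t) (c t) -> is_vderive c t v ->
  is_derive (fun s => vnorm (c s)) t (dot (c t) v / vnorm (c t)).
Proof.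
  intros Hpos Hv. unfold vnorm.
  assert (Hs : 0 < sqrt (dot (c t) (c t))) by now apply sqrt_lt_R0.
  replace (dot (c t) v / sqrt (dot (c t) (c t)))
    with ((dot v (c t) + dot (c t) v) / (2 * sqrt (dot (c t) (c t))))
    by (rewrite dot_comm; field; lra).
  apply (is_derive_sqrt (fun s => dot (c s) (c s))); [now apply is_derive_dot | exact Hpos].
Qed.

Lemma dot_derive_locally_const c d t v w (k : R) :
  locally t (fun s => dot (c s) (d s) = k) -> is_vderive c t v -> is_vderive d t w ->
  dot v (d t) + dot (c t) w = 0.
Proof.
  intros Hk Hv Hw.
  exact (is_derive_eq0_of_locally_const _ t k _ Hk (is_derive_dot c d t v w Hv Hw)).
Qed.

Lemma is_vderive_0_const_on_I (a b : Rbar) c :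
  (forall s, in_I a b s -> is_vderive c s vzero) ->
  forall s1 s2, in_I a b s1 -> in_I a b s2 -> c s1 = c s2.
Proof.
  intros Hc s1 s2 H1 H2.
  veq; [apply (is_derive_0_const_on_I a b (fun u => vx (c u)))
       |apply (is_derive_0_const_on_I a b (fun u => vy (c u)))
       |apply (is_derive_0_const_on_I a b (fun u => vz (c u)))]; auto;
    intros u Hu; apply (Hc u Hu).
Qed.

Definition vDerive_n (c : R -> V3) (n : nat) (t : R) : V3 :=
  mkV3 (Derive_n (fun s => vx (c s)) n t) (Derive_n (fun s => vy (c s)) n t)
       (Derive_n (fun s => vz (c s)) n t).

Lemma smooth_on_is_vderive a b c n t : smooth_on a b c -> in_I a b t ->
  is_vderive (vDerive_n c n) t (vDerive_n c (S n) t).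
Proof.
  intros Hc Ht. destruct (Hc n t Ht) as [H1 [H2 H3]].
  split; [|split]; now apply Derive_correct.
Qed.

(** * Frenet systems *)

Definition frenet_system (k tau : R -> R) (E1 E2 E3 : R -> V3) (t : R) : Prop :=
  is_vderive E1 t (vscal (k t) (E2 t)) /\
  is_vderive E2 t (vadd (vscal (- k t) (E1 t)) (vscal (tau t) (E3 t))) /\
  is_vderive E3 t (vscal (- tau t) (E2 t)).

Lemma frenet_system_lin C1 C2 C3 k tau E1 E2 E3 t :
  frenet_system k tau E1 E2 E3 t ->
  frenet_system k tau (fun s => lin C1 C2 C3 (E1 s)) (fun s => lin C1 C2 C3 (E2 s))
    (fun s => lin C1 C2 C3 (E3 s)) t.
Proof.
  intros [H1 [H2 H3]]. split; [|split]; rewrite <- ?lin_vscal, <- ?lin_vadd;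
    now apply is_vderive_lin.
Qed.

Lemma frenet_system_flip k tau E1 E2 E3 t s : (s = 1 \/ s = -1) -> tau t = s * k t ->
  frenet_system k tau E1 E2 E3 t ->
  frenet_system k tau (fun u => vscal s (E3 u)) (fun u => vscal (-1) (E2 u))
    (fun u => vscal s (E1 u)) t.
Proof.
  intros Hs Ht [H1 [H2 H3]]. split; [|split].
  - replace (vscal (k t) (vscal (-1) (E2 t))) with (vscal s (vscal (- tau t) (E2 t)))
      by (rewrite Ht; destruct Hs as [-> | ->]; veq; ring).
    now apply is_vderive_cscal.
  - replace (vadd (vscal (- k t) (vscal s (E3 t))) (vscal (tau t) (vscal s (E1 t))))
      with (vscal (-1) (vadd (vscal (- k t) (E1 t)) (vscal (tau t) (E3 t))))
      by (rewrite Ht; destruct Hs as [-> | ->]; veq; ring).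
    now apply is_vderive_cscal.
  - replace (vscal (- tau t) (vscal (-1) (E2 t))) with (vscal s (vscal (k t) (E2 t)))
      by (rewrite Ht; destruct Hs as [-> | ->]; veq; ring).
    now apply is_vderive_cscal.
Qed.

Lemma frenet_system_dot_sum k tau E1 E2 E3 F1 F2 F3 t :
  frenet_system k tau E1 E2 E3 t -> frenet_system k tau F1 F2 F3 t ->
  is_derive (fun s => dot (E1 s) (F1 s) + dot (E2 s) (F2 s) + dot (E3 s) (F3 s)) t 0.
Proof.
  intros [H1 [H2 H3]] [G1 [G2 G3]].
  assert (D := is_derive_plus _ _ t _ _
    (is_derive_plus _ _ t _ _ (is_derive_dot _ _ t _ _ H1 G1) (is_derive_dot _ _ t _ _ H2 G2))
    (is_derive_dot _ _ t _ _ H3 G3)).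
  match type of D with is_derive _ _ ?d => replace 0 with d; [exact D|] end.
  unfold dot, plus; simpl. ring.
Qed.

Definition unit_triple (u v w : V3) : Prop := dot u u = 1 /\ dot v v = 1 /\ dot w w = 1.

(* The sum of the three inner products is constant and equals 3 exactly when the frames agree. *)
Lemma frenet_system_unique_on_I a b k tau E1 E2 E3 F1 F2 F3 s0 :
  (forall s, in_I a b s -> frenet_system k tau E1 E2 E3 s) ->
  (forall s, in_I a b s -> frenet_system k tau F1 F2 F3 s) ->
  (forall s, in_I a b s -> unit_triple (E1 s) (E2 s) (E3 s)) ->
  (forall s, in_I a b s -> unit_triple (F1 s) (F2 s) (F3 s)) ->
  in_I a b s0 -> E1 s0 = F1 s0 -> E2 s0 = F2 s0 -> E3 s0 = F3 s0 ->
  forall s, in_I a b s -> E1 s = F1 s /\ E2 s = F2 s /\ E3 s = F3 s.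
Proof.
  intros HE HF HEu HFu H0 E1F1 E2F2 E3F3 s Hs.
  assert (Hsum := is_derive_0_const_on_I a b _
    (fun u Hu => frenet_system_dot_sum _ _ _ _ _ _ _ _ u (HE u Hu) (HF u Hu)) s s0 Hs H0).
  simpl in Hsum. rewrite <- E1F1, <- E2F2, <- E3F3 in Hsum.
  destruct (HEu s0 H0) as [U1 [U2 U3]]. rewrite U1, U2, U3 in Hsum.
  destruct (HEu s Hs) as [V1 [V2 V3]]. destruct (HFu s Hs) as [W1 [W2 W3]].
  assert (L1 := dot_unit_le1 _ _ V1 W1). assert (L2 := dot_unit_le1 _ _ V2 W2).
  assert (L3 := dot_unit_le1 _ _ V3 W3).
  split; [|split]; apply unit_eq_of_dot1; auto; lra.
Qed.

(** * The Frenet frame of a curve and its evolute *)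

Definition evolute_bcoef (c : R -> V3) (t : R) : R := Derive (radius c) t / torsion c t.

(* The evolute moves along the binormal with this signed speed. *)
Definition evolute_speed (c : R -> V3) (t : R) : R :=
  torsion c t / curvature c t + Derive (evolute_bcoef c) t.

Section Frenet.
Variables (a b : Rbar) (xi : R -> V3).
Hypothesis xi_smooth : smooth_on a b xi.
Hypothesis xi_unit_speed : forall t, in_I a b t -> vnorm (dV xi t) = 1.
Hypothesis curvature_pos : forall t, in_I a b t -> 0 < curvature xi t.

Local Notation T := (tangent xi).
Local Notation N := (normal xi).
Local Notation B := (binormal xi).
Local Notation k := (curvature xi).
Local Notation tau := (torsion xi).
Local Notation r := (radius xi).
Local Notation xi2 := (dV (dV xi)).
Local Notation xi3 := (dV (dV (dV xi))).

Lemma xi_is_vderive t : in_I a b t -> is_vderive xi t (T t).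
Proof. exact (smooth_on_is_vderive a b xi 0 t xi_smooth). Qed.

Lemma tangent_is_vderive t : in_I a b t -> is_vderive T t (xi2 t).
Proof. exact (smooth_on_is_vderive a b xi 1 t xi_smooth). Qed.

Lemma xi2_is_vderive t : in_I a b t -> is_vderive xi2 t (xi3 t).
Proof. exact (smooth_on_is_vderive a b xi 2 t xi_smooth). Qed.

Lemma xi3_ex_vderive t : in_I a b t -> ex_vderive xi3 t.
Proof. intro Ht. eexists. exact (smooth_on_is_vderive a b xi 3 t xi_smooth Ht). Qed.

Lemma tangent_unit t : in_I a b t -> dot (T t) (T t) = 1.
Proof. intro Ht. exact (dot_self_of_vnorm1 _ (xi_unit_speed t Ht)). Qed.

Lemma tangent_perp_xi2 t : in_I a b t -> dot (T t) (xi2 t) = 0.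
Proof.
  intro Ht.
  assert (H := dot_derive_locally_const T T t _ _ 1 (locally_on_I a b _ t Ht tangent_unit)
                 (tangent_is_vderive t Ht) (tangent_is_vderive t Ht)).
  rewrite dot_comm in H. lra.
Qed.

Lemma xi2_dot_self t : dot (xi2 t) (xi2 t) = k t ^ 2.
Proof. unfold curvature, vnorm. rewrite pow2_sqrt by apply dot_self_ge0. reflexivity. Qed.

Lemma xi2_eq t : in_I a b t -> xi2 t = vscal (k t) (N t).
Proof. intro Ht. assert (Hk := curvature_pos t Ht). unfold normal. veq; field; lra. Qed.

Lemma frenet_orthonormal t : in_I a b t -> orthonormal (T t) (N t).
Proof.
  intro Ht. assert (Hk := curvature_pos t Ht). unfold normal.
  split; [|split].
  - now apply tangent_unit.
  - rewrite dot_scal_l, dot_scal_r, xi2_dot_self. field. lra.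
  - rewrite dot_scal_r, tangent_perp_xi2 by exact Ht. ring.
Qed.

Lemma binormal_unit t : in_I a b t -> dot (B t) (B t) = 1.
Proof. intro Ht. exact (proj1 (orthonormal_cross _ _ (frenet_orthonormal t Ht))). Qed.

Lemma frenet_unit_triple t : in_I a b t -> unit_triple (T t) (N t) (B t).
Proof.
  intro Ht. destruct (frenet_orthonormal t Ht) as [H1 [H2 _]].
  split; [|split]; auto. now apply binormal_unit.
Qed.

Lemma curvature_is_derive t : in_I a b t -> is_derive k t (dot (xi2 t) (xi3 t) / k t).
Proof.
  intro Ht. apply (is_derive_vnorm xi2); [|now apply xi2_is_vderive].
  rewrite xi2_dot_self. apply pow_lt, curvature_pos, Ht.
Qed.

Lemma Derive_curvature t : in_I a b t -> Derive k t = dot (xi2 t) (xi3 t) / k t.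
Proof. intro Ht. exact (is_derive_unique _ _ _ (curvature_is_derive t Ht)). Qed.

Lemma radius_is_derive t : in_I a b t -> is_derive r t (- Derive k t / k t ^ 2).
Proof.
  intro Ht. assert (Hk := curvature_pos t Ht).
  apply (is_derive_inv k); [|lra]. rewrite Derive_curvature by exact Ht.
  now apply curvature_is_derive.
Qed.

Lemma radius_sq_is_derive t : in_I a b t ->
  is_derive (fun s => (/ k s) ^ 2) t (2 * r t * Derive r t).
Proof.
  intro Ht. rewrite (is_derive_unique _ _ _ (radius_is_derive t Ht)).
  replace (2 * r t * (- Derive k t / k t ^ 2))
    with (INR 2 * (- Derive k t / k t ^ 2) * r t ^ Init.Nat.pred 2) by (simpl; ring).
  apply (is_derive_pow r), radius_is_derive, Ht.
Qed.

Lemma normal_is_vderive t : in_I a b t ->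
  is_vderive N t (vadd (vscal (Derive r t) (xi2 t)) (vscal (r t) (xi3 t))).
Proof.
  intro Ht. apply (is_vderive_scal r xi2); [|now apply xi2_is_vderive].
  rewrite (is_derive_unique _ _ _ (radius_is_derive t Ht)). now apply radius_is_derive.
Qed.

Lemma normal_is_vderive_dV t : in_I a b t -> is_vderive N t (dV N t).
Proof.
  intro Ht. rewrite (is_vderive_dV _ _ _ (normal_is_vderive t Ht)). now apply normal_is_vderive.
Qed.

Lemma frenet_normal t : in_I a b t ->
  dV N t = vadd (vscal (- k t) (T t)) (vscal (tau t) (B t)).
Proof.
  intro Ht. assert (HN := normal_is_vderive_dV t Ht). assert (Hon := frenet_orthonormal t Ht).
  assert (HT : dot (dV N t) (T t) = - k t).
  { assert (H := dot_derive_locally_const T N t _ _ 0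
      (locally_on_I a b _ t Ht (fun s Hs => proj2 (proj2 (frenet_orthonormal s Hs))))
      (tangent_is_vderive t Ht) HN).
    rewrite xi2_eq, dot_scal_l, (proj1 (proj2 Hon)), dot_comm in H by exact Ht. lra. }
  assert (HNN : dot (dV N t) (N t) = 0).
  { assert (H := dot_derive_locally_const N N t _ _ 1
      (locally_on_I a b _ t Ht (fun s Hs => proj1 (proj2 (frenet_orthonormal s Hs)))) HN HN).
    rewrite (dot_comm (N t)) in H. lra. }
  rewrite (orthonormal_expand (T t) (N t) (dV N t)) at 1 by exact Hon.
  rewrite HT, HNN. change (dot (dV N t) (cross (T t) (N t))) with (tau t).
  veq; ring.
Qed.

Lemma binormal_is_vderive t : in_I a b t -> is_vderive B t (vscal (- tau t) (N t)).
Proof.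
  intro Ht.
  assert (D := is_vderive_cross _ _ t _ _ (tangent_is_vderive t Ht)
                 (normal_is_vderive_dV t Ht)).
  rewrite xi2_eq, frenet_normal in D by exact Ht.
  assert (Hon := frenet_orthonormal t Ht).
  replace (vscal (- tau t) (N t)) with
    (vadd (cross (vscal (k t) (N t)) (N t))
          (cross (T t) (vadd (vscal (- k t) (T t)) (vscal (tau t) (cross (T t) (N t)))))).
  - exact D.
  - destruct Hon as [H1 [H2 H3]]. destruct (T t) as [t1 t2 t3], (N t) as [n1 n2 n3].
    unfold dot in *; simpl in *. veq; nsatz.
Qed.

Lemma frenet_system_frenet_frame t : in_I a b t -> frenet_system k tau T N B t.
Proof.
  intro Ht. split; [|split].
  - rewrite <- xi2_eq by exact Ht. now apply tangent_is_vderive.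
  - rewrite <- frenet_normal by exact Ht.
    exact (normal_is_vderive_dV t Ht).
  - now apply binormal_is_vderive.
Qed.

Lemma xi3_eq t : in_I a b t -> xi3 t = vadd (vscal (Derive k t) (N t)) (vscal (k t) (dV N t)).
Proof.
  intro Ht. apply (is_vderive_unique xi2 t); [now apply xi2_is_vderive|].
  apply (is_vderive_ext_loc (fun s => vscal (k s) (N s))).
  - apply (locally_on_I a b _ t Ht). intros s Hs. symmetry. now apply xi2_eq.
  - apply is_vderive_scal.
    + rewrite Derive_curvature by exact Ht. now apply curvature_is_derive.
    + exact (normal_is_vderive_dV t Ht).
Qed.

Lemma det_frenet t : in_I a b t -> det3 (T t) (xi2 t) (xi3 t) = k t ^ 2 * tau t.
Proof.
  intro Ht. rewrite xi3_eq, xi2_eq, frenet_normal by exact Ht.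
  assert (HB := binormal_unit t Ht). change (binormal xi t) with (cross (T t) (N t)) in HB |- *.
  transitivity (k t ^ 2 * tau t * dot (cross (T t) (N t)) (cross (T t) (N t))).
  - unfold det3, dot, cross; simpl. ring.
  - rewrite HB. ring.
Qed.

Lemma Derive_curvature_ex_derive t : in_I a b t -> ex_derive (Derive k) t.
Proof.
  intro Ht. destruct (xi3_ex_vderive t Ht) as [v Hv]. eexists.
  apply (is_derive_ext_loc (fun s => dot (xi2 s) (xi3 s) / k s)).
  - apply (locally_on_I a b _ t Ht). intros s Hs. symmetry. now apply Derive_curvature.
  - apply (is_derive_div (fun s => dot (xi2 s) (xi3 s)) k).
    + apply is_derive_dot; [now apply xi2_is_vderive | exact Hv].
    + now apply curvature_is_derive.
    + apply Rgt_not_eq, curvature_pos, Ht.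
Qed.

Lemma Derive_radius_ex_derive t : in_I a b t -> ex_derive (Derive r) t.
Proof.
  intro Ht. destruct (Derive_curvature_ex_derive t Ht) as [d Hd]. eexists.
  apply (is_derive_ext_loc (fun s => - Derive k s / k s ^ 2)).
  - apply (locally_on_I a b _ t Ht). intros s Hs. symmetry.
    exact (is_derive_unique _ _ _ (radius_is_derive s Hs)).
  - apply (is_derive_div (fun s => - Derive k s) (fun s => k s ^ 2)).
    + exact (is_derive_opp (Derive k) t d Hd).
    + apply (is_derive_pow k). now apply curvature_is_derive.
    + apply pow_nonzero, Rgt_not_eq, curvature_pos, Ht.
Qed.

Lemma dV_normal_ex_vderive t : in_I a b t -> ex_vderive (dV N) t.
Proof.
  intro Ht. destruct (Derive_radius_ex_derive t Ht) as [d Hd].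
  destruct (xi3_ex_vderive t Ht) as [v Hv]. eexists.
  apply (is_vderive_ext_loc (fun s => vadd (vscal (Derive r s) (xi2 s)) (vscal (r s) (xi3 s)))).
  - apply (locally_on_I a b _ t Ht). intros s Hs. symmetry.
    exact (is_vderive_dV _ _ _ (normal_is_vderive s Hs)).
  - apply is_vderive_add; apply is_vderive_scal; eauto using xi2_is_vderive, radius_is_derive.
Qed.

Lemma torsion_ex_derive t : in_I a b t -> ex_derive tau t.
Proof.
  intro Ht. destruct (dV_normal_ex_vderive t Ht) as [v Hv]. eexists.
  exact (is_derive_dot _ _ t _ _ Hv (binormal_is_vderive t Ht)).
Qed.

Lemma torsion_eq_sign_mul_curvature : Rbar_lt a b ->
  (forall t, in_I a b t -> k t = Rabs (tau t)) ->
  exists s1, (s1 = 1 \/ s1 = -1) /\ forall t, in_I a b t -> tau t = s1 * k t.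
Proof.
  intros Hab Habs. destruct (in_I_inhabited a b Hab) as [s0 H0].
  set (sg := fun s => tau s / k s).
  assert (Hsg : forall s, in_I a b s -> sg s = 1 \/ sg s = -1).
  { intros s Hs. assert (Hk := curvature_pos s Hs). assert (E := Habs s Hs). unfold sg.
    destruct (Rle_dec 0 (tau s)).
    - rewrite Rabs_pos_eq in E by assumption. left. rewrite E. field. lra.
    - rewrite Rabs_left in E by lra. right. rewrite E. field. lra. }
  assert (Hder : forall s, in_I a b s -> is_derive sg s 0).
  { intros s Hs. destruct (torsion_ex_derive s Hs) as [d Hd].
    assert (D := is_derive_div tau k s _ _ Hd (curvature_is_derive s Hs)
                   (Rgt_not_eq _ _ (curvature_pos s Hs))).
    assert (Hsq : locally s (fun u => sg u * sg u = 1)).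
    { apply (locally_on_I a b _ s Hs). intros u Hu. destruct (Hsg u Hu) as [-> | ->]; ring. }
    rewrite <- (is_derive_eq0_of_locally_sq1 sg s _ Hsq D). exact D. }
  assert (Hconst : forall s, in_I a b s -> sg s = sg s0)
    by (intros s Hs; exact (is_derive_0_const_on_I a b sg Hder s s0 Hs H0)).
  exists (sg s0). split; [now apply Hsg|]. intros t Ht.
  rewrite <- (Hconst t Ht). unfold sg. field. apply Rgt_not_eq, curvature_pos, Ht.
Qed.

Hypothesis torsion_neq0 : forall t, in_I a b t -> tau t <> 0.

Local Notation q := (evolute_bcoef xi).
Local Notation sigma := (evolute_speed xi).

Lemma evolute_bcoef_is_derive t : in_I a b t -> is_derive q t (Derive q t).
Proof.
  intro Ht. apply Derive_correct.
  destruct (Derive_radius_ex_derive t Ht) as [d Hd]. destruct (torsion_ex_derive t Ht) as [d' Hd'].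
  eexists. apply (is_derive_div (Derive r) tau); [exact Hd | exact Hd' | now apply torsion_neq0].
Qed.

Lemma evolute_is_vderive t : in_I a b t -> is_vderive (evolute xi) t (vscal (sigma t) (B t)).
Proof.
  intro Ht. assert (Hk := curvature_pos t Ht). assert (Htau := torsion_neq0 t Ht).
  change (evolute xi) with (fun s => vadd (vadd (xi s) (vscal (r s) (N s))) (vscal (q s) (B s))).
  replace (vscal (sigma t) (B t)) with
    (vadd (vadd (T t) (vadd (vscal (Derive r t) (N t)) (vscal (r t) (dV N t))))
          (vadd (vscal (Derive q t) (B t)) (vscal (q t) (vscal (- tau t) (N t))))).
  - apply is_vderive_add; [apply is_vderive_add|]; [now apply xi_is_vderive| |].
    + apply is_vderive_scal; [|exact (normal_is_vderive_dV t Ht)].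
      rewrite (is_derive_unique _ _ _ (radius_is_derive t Ht)). now apply radius_is_derive.
    + apply is_vderive_scal; [now apply evolute_bcoef_is_derive | now apply binormal_is_vderive].
  - rewrite frenet_normal by exact Ht. unfold evolute_speed, evolute_bcoef, radius.
    veq; field; split; lra.
Qed.

Section Congruent.
Variables (C1 C2 C3 p : V3).
Hypothesis L_dot : dot_preserving (lin C1 C2 C3).
Hypothesis L_det : det_preserving (lin C1 C2 C3).
Hypothesis evolute_eq : forall t, in_I a b t -> evolute xi t = vadd (lin C1 C2 C3 (xi t)) p.

Local Notation L := (lin C1 C2 C3).

Lemma lin_tangent t : in_I a b t -> L (T t) = vscal (sigma t) (B t).
Proof.
  intro Ht. apply (is_vderive_unique (evolute xi) t); [|now apply evolute_is_vderive].
  apply (is_vderive_ext_loc (fun s => vadd (L (xi s)) p)).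
  - apply (locally_on_I a b _ t Ht). intros s Hs. symmetry. now apply evolute_eq.
  - replace (L (T t)) with (vadd (L (T t)) vzero) by (unfold vzero; veq; ring).
    apply is_vderive_add; [apply is_vderive_lin, xi_is_vderive, Ht | apply is_vderive_const].
Qed.

Lemma evolute_speed_sq t : in_I a b t -> sigma t * sigma t = 1.
Proof.
  intro Ht. assert (E := L_dot (T t) (T t)).
  rewrite lin_tangent, dot_scal_l, dot_scal_r, binormal_unit, tangent_unit in E by exact Ht.
  lra.
Qed.

Lemma evolute_speed_is_derive t : in_I a b t -> is_derive sigma t 0.
Proof.
  intro Ht.
  assert (D := is_derive_dot _ _ t _ _ (is_vderive_lin C1 C2 C3 _ t _ (tangent_is_vderive t Ht))
                 (binormal_is_vderive t Ht)).
  apply (is_derive_ext_loc _ sigma) in D.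
  - rewrite <- (is_derive_eq0_of_locally_sq1 sigma t _
                  (locally_on_I a b _ t Ht evolute_speed_sq) D).
    exact D.
  - apply (locally_on_I a b _ t Ht). intros s Hs.
    rewrite lin_tangent, dot_scal_l, binormal_unit by exact Hs. apply Rmult_1_r.
Qed.

Lemma lin_xi2 t : in_I a b t -> L (xi2 t) = vscal (- (sigma t * tau t)) (N t).
Proof.
  intro Ht. apply (is_vderive_unique (fun s => L (T s)) t).
  - apply is_vderive_lin, tangent_is_vderive, Ht.
  - apply (is_vderive_ext_loc (fun s => vscal (sigma s) (B s))).
    + apply (locally_on_I a b _ t Ht). intros s Hs. symmetry. now apply lin_tangent.
    + replace (vscal (- (sigma t * tau t)) (N t))
        with (vadd (vscal 0 (B t)) (vscal (sigma t) (vscal (- tau t) (N t)))) by (veq; ring).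
      apply is_vderive_scal; [now apply evolute_speed_is_derive | now apply binormal_is_vderive].
Qed.

Lemma lin_xi3 t : in_I a b t -> exists c,
  L (xi3 t) = vadd (vscal c (N t)) (vscal (- (sigma t * tau t)) (dV N t)).
Proof.
  intro Ht. destruct (torsion_ex_derive t Ht) as [d Hd]. eexists.
  apply (is_vderive_unique (fun s => L (xi2 s)) t).
  - apply is_vderive_lin, xi2_is_vderive, Ht.
  - apply (is_vderive_ext_loc (fun s => vscal (- (sigma s * tau s)) (N s))).
    + apply (locally_on_I a b _ t Ht). intros s Hs. symmetry. now apply lin_xi2.
    + apply (is_vderive_scal (fun s => - (sigma s * tau s)) N).
      * exact (is_derive_opp (fun s => sigma s * tau s) t _
          (Derive.is_derive_mult sigma tau t _ _ (evolute_speed_is_derive t Ht) Hd)).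
      * exact (normal_is_vderive_dV t Ht).
Qed.

(* Compare [det3 T xi'' xi''' = k^2 tau] with the determinant of its image under [L]. *)
Lemma curvature_eq_speed_mul_torsion t : in_I a b t -> k t = sigma t * tau t.
Proof.
  intro Ht. destruct (lin_xi3 t Ht) as [c Hc].
  assert (E := L_det (T t) (xi2 t) (xi3 t)).
  rewrite det_frenet, lin_tangent, lin_xi2, Hc, frenet_normal in E by exact Ht.
  assert (HB := binormal_unit t Ht). assert (S := evolute_speed_sq t Ht).
  assert (Hk := curvature_pos t Ht). assert (Htau := torsion_neq0 t Ht).
  change (binormal xi t) with (cross (T t) (N t)) in E, HB.
  assert (E' : k t ^ 2 * tau t = sigma t * tau t ^ 2 * k t).
  { rewrite <- E. transitivity ((sigma t * sigma t) * sigma t * tau t ^ 2 * k t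
                             * dot (cross (T t) (N t)) (cross (T t) (N t))).
    - unfold det3, dot, cross; simpl. ring.
    - rewrite S, HB. ring. }
  assert (Z : k t * tau t * (k t - sigma t * tau t) = 0)
    by (transitivity (k t ^ 2 * tau t - sigma t * tau t ^ 2 * k t); [ring | rewrite E'; ring]).
  apply Rmult_integral in Z. destruct Z as [Z|Z]; [|lra].
  apply Rmult_integral in Z. destruct Z; lra.
Qed.

Lemma Derive_evolute_bcoef_eq0 t : in_I a b t -> Derive q t = 0.
Proof.
  intro Ht. assert (E := curvature_eq_speed_mul_torsion t Ht).
  assert (S := evolute_speed_sq t Ht). assert (Hk := curvature_pos t Ht).
  assert (Htau := torsion_neq0 t Ht).
  assert (Hs : tau t / k t = sigma t).
  { rewrite E. replace (tau t) with (sigma t * sigma t * tau t) at 1 by (rewrite S; ring).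
    field. split; [exact Htau | intro Z; rewrite Z in S; lra]. }
  unfold evolute_speed in Hs |- *. fold (Derive q t).
  lra.
Qed.

Lemma curvature_eq_Rabs_torsion t : in_I a b t -> k t = Rabs (tau t).
Proof.
  intro Ht. assert (E := curvature_eq_speed_mul_torsion t Ht). assert (Hk := curvature_pos t Ht).
  destruct (Rsqr_1_cases _ (evolute_speed_sq t Ht)) as [Hs|Hs]; rewrite Hs in E.
  - rewrite Rabs_pos_eq; lra.
  - rewrite Rabs_left; lra.
Qed.

(* [r r' = sigma q] with [sigma] and [q] constant, so [(r^2)'] is constant. *)
Lemma inv_curvature_sq_affine : Rbar_lt a b ->
  exists al be, forall t, in_I a b t -> (/ k t) ^ 2 = al * t + be.
Proof.
  intro Hab. destruct (in_I_inhabited a b Hab) as [s0 H0].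
  assert (Hsig : forall s, in_I a b s -> sigma s = sigma s0).
  { intros s Hs. apply (is_derive_0_const_on_I a b sigma); auto using evolute_speed_is_derive. }
  assert (Hq : forall s, in_I a b s -> q s = q s0).
  { intros s Hs. apply (is_derive_0_const_on_I a b q); auto. intros u Hu.
    rewrite <- (Derive_evolute_bcoef_eq0 u Hu). now apply evolute_bcoef_is_derive. }
  exists (2 * (sigma s0 * q s0)). apply affine_on_I_of_is_derive; [exact Hab|].
  intros s Hs. rewrite <- (Hsig s Hs), <- (Hq s Hs).
  replace (2 * (sigma s * q s)) with (2 * r s * Derive r s); [now apply radius_sq_is_derive|].
  assert (E := curvature_eq_speed_mul_torsion s Hs). assert (S := evolute_speed_sq s Hs).
  assert (Hk := curvature_pos s Hs).
  assert (Et : tau s = sigma s * k s)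
    by (rewrite E, <- Rmult_assoc, S; ring).
  unfold evolute_bcoef. change (r s) with (/ k s). rewrite Et.
  field. split; [lra | intro Z; rewrite Z in S; lra].
Qed.
End Congruent.

Section Converse.
Variables (s1 al be s0 : R).
Hypothesis s1_sign : s1 = 1 \/ s1 = -1.
Hypothesis torsion_eq : forall t, in_I a b t -> tau t = s1 * k t.
Hypothesis inv_curvature_sq_eq : forall t, in_I a b t -> (/ k t) ^ 2 = al * t + be.
Hypothesis s0_in_I : in_I a b s0.

Lemma radius_mul_Derive t : in_I a b t -> r t * Derive r t = al / 2.
Proof.
  intro Ht.
  assert (D : is_derive (fun s => (/ k s) ^ 2) t (al * 1 + 0)).
  { apply (is_derive_ext_loc (fun s => al * s + be)).
    - apply (locally_on_I a b _ t Ht). intros s Hs. symmetry. now apply inv_curvature_sq_eq.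
    - apply (is_derive_plus (fun s => al * s) (fun _ => be)).
      + apply (is_derive_scal (fun s => s)), (is_derive_id t).
      + apply (is_derive_const be). }
  apply is_derive_unique in D. rewrite (is_derive_unique _ _ _ (radius_sq_is_derive t Ht)) in D.
  lra.
Qed.

Lemma evolute_bcoef_const t : in_I a b t -> q t = s1 * (al / 2).
Proof.
  intro Ht. assert (Hk := curvature_pos t Ht). unfold evolute_bcoef.
  rewrite torsion_eq, <- (radius_mul_Derive t Ht) by exact Ht. change (r t) with (/ k t).
  destruct s1_sign as [-> | ->]; field; lra.
Qed.

Lemma evolute_speed_eq_sign t : in_I a b t -> sigma t = s1.
Proof.
  intro Ht. assert (Hk := curvature_pos t Ht). unfold evolute_speed.
  replace (Derive q t) with 0.
  - rewrite torsion_eq by exact Ht. field. lra.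
  - symmetry. apply is_derive_unique, (is_derive_ext_loc (fun _ => s1 * (al / 2))).
    + apply (locally_on_I a b _ t Ht). intros s Hs. symmetry. now apply evolute_bcoef_const.
    + apply (is_derive_const (s1 * (al / 2))).
Qed.

Let P := vscal s1 (B s0).
Let Q := vscal (-1) (N s0).
Let L := frame_map (T s0) (N s0) P Q.

Lemma flip_frame_orthonormal : orthonormal P Q /\ cross P Q = vscal s1 (T s0).
Proof.
  unfold P, Q. change (binormal xi s0) with (cross (T s0) (N s0)).
  destruct (frenet_orthonormal s0 s0_in_I) as [H1 [H2 H3]].
  destruct (T s0) as [t1 t2 t3], (N s0) as [n1 n2 n3].
  unfold orthonormal, dot, cross in *; simpl in *.
  destruct s1_sign as [-> | ->]; (split; [split; [|split] | veq]); nsatz.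
Qed.

Lemma frame_map_tangent t : in_I a b t -> L (T t) = vscal s1 (B t).
Proof.
  intro Ht. destruct flip_frame_orthonormal as [HPQ HPQc].
  assert (Hon0 := frenet_orthonormal s0 s0_in_I).
  destruct (frame_map_frame (T s0) (N s0) P Q Hon0) as [LT [LN LB]].
  apply (frenet_system_unique_on_I a b k tau
           (fun s => L (T s)) (fun s => L (N s)) (fun s => L (B s))
           (fun s => vscal s1 (B s)) (fun s => vscal (-1) (N s)) (fun s => vscal s1 (T s)) s0);
    auto.
  - intros s Hs. apply frenet_system_lin, frenet_system_frenet_frame, Hs.
  - intros s Hs. apply frenet_system_flip; auto using frenet_system_frenet_frame.
  - intros s Hs. unfold unit_triple. rewrite !(frame_map_dot _ _ _ _ Hon0 HPQ).
    now apply frenet_unit_triple.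
  - intros s Hs. destruct (frenet_unit_triple s Hs) as [H1 [H2 H3]].
    unfold unit_triple. rewrite !dot_scal_l, !dot_scal_r, H1, H2, H3.
    destruct s1_sign as [-> | ->]; repeat split; ring.
  - change (L (B s0)) with (frame_map (T s0) (N s0) P Q (cross (T s0) (N s0))).
    now rewrite LB, HPQc.
Qed.

Lemma evolute_sub_frame_map_const t : in_I a b t ->
  vsub (evolute xi t) (L (xi t)) = vsub (evolute xi s0) (L (xi s0)).
Proof.
  intro Ht. refine (is_vderive_0_const_on_I a b (fun s => vsub (evolute xi s) (L (xi s))) _
                      t s0 Ht s0_in_I).
  intros s Hs. replace vzero with (vsub (vscal (sigma s) (B s)) (L (T s))).
  - apply is_vderive_sub; [now apply evolute_is_vderive | apply is_vderive_lin, xi_is_vderive, Hs].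
  - rewrite frame_map_tangent, evolute_speed_eq_sign by exact Hs. unfold vzero. veq; ring.
Qed.

Lemma evolute_congruent :
  exists M, orient_isometry M /\ forall t, in_I a b t -> M (xi t) = evolute xi t.
Proof.
  destruct flip_frame_orthonormal as [HPQ _].
  assert (Hon0 := frenet_orthonormal s0 s0_in_I).
  exists (fun x => vadd (L x) (vsub (evolute xi s0) (L (xi s0)))). split.
  - apply orient_isometry_of_lin; [apply frame_map_dot | apply frame_map_det]; assumption.
  - intros t Ht. rewrite <- (evolute_sub_frame_map_const t Ht). veq; ring.
Qed.
End Converse.
End Frenet.

Theorem mainTheorem7 (a b : Rbar) (xi : R -> V3) :
  Rbar_lt a b ->
  smooth_on a b xi ->
  (forall t, in_I a b t -> vnorm (dV xi t) = 1) ->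
  (forall t, in_I a b t -> 0 < curvature xi t) ->
  (forall t, in_I a b t -> torsion xi t <> 0) ->
  ((exists M : V3 -> V3, orient_isometry M /\
      forall t, in_I a b t -> M (xi t) = evolute xi t)
   <->
   ((forall t, in_I a b t -> curvature xi t = Rabs (torsion xi t)) /\
    ((exists k0 : R, forall t, in_I a b t -> curvature xi t = k0) \/
     (exists (c t0 : R), 0 < c /\ ~ in_I a b t0 /\
        forall t, in_I a b t -> curvature xi t = c / sqrt (Rabs (t - t0)))))).
Proof.
  intros Hab Hsm Hunit Hk Htau. split.
  - intros [M [HM Hev]].
    destruct (orient_isometry_lin M HM) as [C1 [C2 [C3 [Ldot [Ldet HMl]]]]].
    assert (Hev' : forall t, in_I a b t -> evolute xi t = vadd (lin C1 C2 C3 (xi t)) (M vzero))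
      by (intros t Ht; rewrite <- Hev, HMl by exact Ht; reflexivity).
    split.
    + exact (curvature_eq_Rabs_torsion a b xi Hsm Hunit Hk Htau C1 C2 C3 _ Ldot Ldet Hev').
    + destruct (inv_curvature_sq_affine a b xi Hsm Hunit Hk Htau C1 C2 C3 _ Ldot Ldet Hev' Hab)
        as [al [be Hr]].
      exact (curvature_cases_of_inv_sq_affine a b (curvature xi) al be Hk Hr).
  - intros [Habs Hcases].
    destruct (inv_sq_affine_of_curvature_cases a b (curvature xi) Hab Hcases) as [al [be Hr]].
    destruct (torsion_eq_sign_mul_curvature a b xi Hsm Hunit Hk Hab Habs) as [s1 [Hs1 Hst]].
    destruct (in_I_inhabited a b Hab) as [s0 H0].
    exact (evolute_congruent a b xi Hsm Hunit Hk Htau s1 al be s0 Hs1 Hst Hr H0).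
Qed.
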